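(* Let $T(x)=\int_{\mathbb R}e^{-\sqrt2|x-y|}\mathrm{sech}^2(y)\,dy$, and for integers $k\ge1$ let $p_k=\int_{\mathbb R}\mathrm{sech}^k(x)\cos(x)\,dx$, $r_k=\int_{\mathbb R}\mathrm{sech}^k(x)T(x)\cos(x)\,dx$, $s_k=\int_{\mathbb R}\mathrm{sech}^k(x)T(x)\tanh(x)\sin(x)\,dx$. Then \begin{align*} r_3&=-r_1+s_1+\sqrt2\,p_1,\\ s_3&=\tfrac13s_1-r_1+\tfrac79\sqrt2\,p_1,\\ r_5&=-r_1+\tfrac23s_1+\tfrac{37}{36}\sqrt2\,p_1,\\ s_5&=-\tfrac25r_1+\tfrac1{15}s_1+\tfrac{13}{36}\sqrt2\,p_1,\\ r_7&=-\tfrac{13}{15}r_1+\tfrac{23}{45}s_1+\tfrac{83\sqrt2}{90}p_1 . \end{align*} *)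

From Stdlib Require Import Reals.
From Coquelicot Require Import Coquelicot.
Open Scope R_scope.

Definition sech (x : R) : R := / cosh x.

Definition int_R (f : R -> R) : R :=
  RInt_gen f (Rbar_locally m_infty) (Rbar_locally p_infty).

Definition T (x : R) : R :=
  int_R (fun y => exp (- sqrt 2 * Rabs (x - y)) * (sech y) ^ 2).

Definition p_ (k : nat) : R := int_R (fun x => (sech x) ^ k * cos x).
Definition r_ (k : nat) : R := int_R (fun x => (sech x) ^ k * T x * cos x).
Definition s_ (k : nat) : R := int_R (fun x => (sech x) ^ k * T x * tanh x * sin x).

From Stdlib Require Import Reals Lra Lia FunctionalExtensionality.
From Coquelicot Require Import Coquelicot.
Open Scope R_scope.

(* T is the convolution of sech^2 with exp(-sqrt 2 |x|), a multiple of the Green's function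
   of 2 - d^2/dx^2, so T and T' are bounded and T'' = 2 T - 2 sqrt 2 sech^2.  Every integrand
   is sech^k (k >= 1) times a bounded continuous function, hence integrable, and integrating by
   parts against sech^k or sech^k tanh leaves no boundary terms.  Using
   (sech^k)' = -k sech^k tanh, tanh' = sech^2 and tanh^2 = 1 - sech^2, the choices h = sin, cos
   give p_k = k q_k and (k+1) p_(k+2) = k p_k + q_k, where q_k = int sech^k tanh sin, while
   h = T sin, T cos, T' cos, T' sin give four relations from which the moments of T' can be
   eliminated.  What remains are recurrences for r_(k+2) and s_(k+2), run from k = 1. *)

Lemma continuous_of_ex_derive (f : R -> R) x : ex_derive f x -> continuous f x.
Proof. apply (ex_derive_continuous (K := R_AbsRing) (V := R_NormedModule)). Qed.

Lemma continuous_Rmult (f g : R -> R) x :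
  continuous f x -> continuous g x -> continuous (fun y => f y * g y) x.
Proof. apply (continuous_mult (K := R_AbsRing)). Qed.

Lemma is_derive_Rmult (f g : R -> R) x df dg l :
  is_derive f x df -> is_derive g x dg -> df * g x + f x * dg = l ->
  is_derive (fun y => f y * g y) x l.
Proof.
  intros f_deriv g_deriv <-.
  apply (is_derive_mult (K := R_AbsRing)); [exact f_deriv | exact g_deriv | apply Rmult_comm].
Qed.

Lemma is_derive_sub_const (f : R -> R) x df c :
  is_derive f x df -> is_derive (fun y => f y - c) x df.
Proof.
  intros f_deriv; rewrite <- (Rminus_0_r df).
  apply (is_derive_minus (V := R_NormedModule));
    [exact f_deriv | apply (is_derive_const (K := R_AbsRing) (V := R_NormedModule))].
Qed.

Lemma is_lim_exp_opp_p : is_lim (fun x => exp (- x)) p_infty 0.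
Proof.
  apply (is_lim_comp exp (fun x => - x) p_infty 0 m_infty).
  - exact is_lim_exp_m.
  - apply (is_lim_opp (fun x => x) p_infty p_infty), is_lim_id.
  - now apply filter_forall.
Qed.

Lemma is_lim_scal_0 (f : R -> R) (s : Rbar) c :
  is_lim f s 0 -> is_lim (fun x => c * f x) s 0.
Proof.
  intros f_lim; replace (Finite 0) with (Rbar_mult c 0) by (simpl; f_equal; ring).
  apply is_lim_scal_l, f_lim.
Qed.

Lemma is_derive_exp_scal b x : is_derive (fun y => exp (b * y)) x (b * exp (b * x)).
Proof. auto_derive; [exact I | ring]. Qed.

Lemma exp_scal_opp_mul b x : exp (- b * x) * exp (b * x) = 1.
Proof. rewrite <- exp_plus, <- exp_0; f_equal; ring. Qed.

Lemma is_lim_exp_scal_m a : 0 < a -> is_lim (fun y => exp (a * y)) m_infty 0.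
Proof.
  intros a_pos; apply (is_lim_comp exp (fun y => a * y) m_infty 0 m_infty).
  - exact is_lim_exp_m.
  - replace m_infty with (Rbar_mult a m_infty) at 2.
    + apply is_lim_scal_l, is_lim_id.
    + simpl; destruct (Rle_dec 0 a) as [a_ge0 | a_lt0];
        [destruct (Rle_lt_or_eq_dec 0 a a_ge0)|]; [reflexivity | lra | lra].
  - now apply filter_forall.
Qed.

Lemma is_lim_exp_scal_p a : 0 < a -> is_lim (fun y => exp (- a * y)) p_infty 0.
Proof.
  intros a_pos; apply (is_lim_ext (fun y => exp (a * - y))); [intros; f_equal; ring|].
  apply (is_lim_comp (fun y => exp (a * y)) (fun y => - y) p_infty 0 m_infty).
  - now apply is_lim_exp_scal_m.
  - apply (is_lim_opp (fun y => y) p_infty p_infty), is_lim_id.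
  - now apply filter_forall.
Qed.

Lemma filterlim_comp_continuous {F : (R -> Prop) -> Prop} {FF : Filter F} (h phi : R -> R) L :
  filterlim h F (locally L) -> continuous phi L ->
  filterlim (fun y => phi (h y)) F (locally (phi L)).
Proof. intros h_lim phi_cont; exact (filterlim_comp _ _ _ _ _ _ _ _ h_lim phi_cont). Qed.

Lemma filterlim_Rabs_sub {F : (R -> Prop) -> Prop} {FF : Filter F} (h : R -> R) c L :
  filterlim h F (locally L) -> filterlim (fun y => Rabs (c - h y)) F (locally (Rabs (c - L))).
Proof.
  intros h_lim; apply (filterlim_comp _ _ _ h (fun z => Rabs (c - z)) F (locally L) _ h_lim).
  apply continuous_Rabs_comp, (continuous_minus (V := R_NormedModule)).
  - apply continuous_const.
  - apply continuous_id.
Qed.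

Lemma filterlim_at_point (f : R -> R) x : filterlim f (at_point x) (locally (f x)).
Proof. intros P HP; exact (locally_singleton _ _ HP). Qed.

(** * Hyperbolic functions *)

Lemma cosh_pos x : 0 < cosh x.
Proof. unfold cosh; pose proof (exp_pos x); pose proof (exp_pos (- x)); lra. Qed.

Lemma cosh_ge_1 x : 1 <= cosh x.
Proof.
  unfold cosh; rewrite exp_Ropp.
  pose proof (exp_pos x) as Ex; set (E := exp x) in *.
  assert (E + / E - 2 = (E - 1) ^ 2 * / E) by (field; lra).
  assert (0 <= (E - 1) ^ 2 * / E).
  { apply Rmult_le_pos; [apply pow2_ge_0 | apply Rlt_le, Rinv_0_lt_compat, Ex]. }
  lra.
Qed.

Lemma sech_pos x : 0 < sech x.
Proof. apply Rinv_0_lt_compat, cosh_pos. Qed.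

Lemma sech_le_1 x : sech x <= 1.
Proof. rewrite <- Rinv_1; apply Rinv_le_contravar; [lra | apply cosh_ge_1]. Qed.

Lemma sech_pow_le_1 n x : sech x ^ n <= 1.
Proof.
  rewrite <- (pow1 n); apply pow_incr.
  pose proof (sech_pos x); pose proof (sech_le_1 x); lra.
Qed.

Lemma sech_pow_le_sech n x : sech x ^ S n <= sech x.
Proof. simpl; pose proof (sech_pos x); pose proof (sech_pow_le_1 n x); nra. Qed.

Lemma Rabs_sech_pow_mul_le n (h : R -> R) M x :
  Rabs (h x) <= M -> Rabs (sech x ^ S n * h x) <= M * sech x.
Proof.
  intros h_bound; rewrite Rabs_mult, Rabs_pos_eq by apply pow_le, Rlt_le, sech_pos.
  pose proof (sech_pow_le_sech n x); pose proof (sech_pos x); pose proof (Rabs_pos (h x)); nra.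
Qed.

Lemma sech_le_2_exp_opp x : sech x <= 2 * exp (- x).
Proof.
  pose proof (exp_pos x); pose proof (exp_pos (- x)).
  replace (sech x) with (2 * / (exp x + exp (- x))) by (unfold sech, cosh; field; lra).
  rewrite exp_Ropp at 2; apply Rmult_le_compat_l; [lra|].
  apply Rinv_le_contravar; lra.
Qed.

Lemma sech_opp x : sech (- x) = sech x.
Proof. unfold sech, cosh; rewrite Ropp_involutive, Rplus_comm; reflexivity. Qed.

Lemma tanh_sqr x : tanh x ^ 2 = 1 - sech x ^ 2.
Proof.
  unfold tanh, sech, sinh, cosh; rewrite exp_Ropp.
  pose proof (exp_pos x); set (E := exp x) in *.
  field; nra.
Qed.

Lemma Rabs_tanh_le_1 x : Rabs (tanh x) <= 1.
Proof. pose proof (tanh_sqr x); pose proof (sech_pos x); apply Rabs_le; nra. Qed.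

Lemma is_derive_tanh x : is_derive tanh x (sech x ^ 2).
Proof.
  unfold tanh, sech; pose proof (cosh_pos x); auto_derive; [lra|].
  unfold sinh, cosh in *; rewrite exp_Ropp in *.
  pose proof (exp_pos x); set (E := exp x) in *.
  field; nra.
Qed.

Lemma is_derive_sech_pow n x :
  is_derive (fun y => sech y ^ n) x (- INR n * sech x ^ n * tanh x).
Proof.
  unfold tanh, sech; pose proof (cosh_pos x); auto_derive; [lra|].
  destruct n as [|n]; [simpl; ring|].
  rewrite S_INR; simpl pred; simpl pow; field; lra.
Qed.

Lemma is_lim_sech_p : is_lim sech p_infty 0.
Proof.
  apply (filterlim_le_le (fun _ => 0) sech (fun x => 2 * exp (- x))).
  - apply filter_forall; intros x.
    pose proof (sech_pos x); pose proof (sech_le_2_exp_opp x); lra.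
  - apply filterlim_const.
  - apply is_lim_scal_0, is_lim_exp_opp_p.
Qed.

Lemma is_lim_sech_m : is_lim sech m_infty 0.
Proof.
  apply (is_lim_ext (fun x => sech (- x))); [intros; apply sech_opp|].
  apply (is_lim_comp sech (fun x => - x) m_infty 0 p_infty).
  - exact is_lim_sech_p.
  - apply (is_lim_opp (fun x => x) m_infty m_infty), is_lim_id.
  - now apply filter_forall.
Qed.

Lemma continuous_sech x : continuous sech x.
Proof. unfold sech; apply continuous_of_ex_derive; auto_derive; apply Rgt_not_eq, cosh_pos. Qed.

Definition gudermannian (x : R) : R := 2 * atan (exp x) - PI / 2.

Lemma is_derive_gudermannian x : is_derive gudermannian x (sech x).
Proof.
  unfold gudermannian, sech, cosh; pose proof (exp_pos x); auto_derive; [auto|].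
  rewrite exp_Ropp; field; nra.
Qed.

Lemma filterlim_gudermannian_m :
  filterlim gudermannian (Rbar_locally m_infty) (locally (- (PI / 2))).
Proof.
  apply (filterlim_comp _ _ _ exp (fun y => 2 * atan y - PI / 2) _ (locally 0)).
  - exact is_lim_exp_m.
  - assert (C : continuous (fun y => 2 * atan y - PI / 2) 0)
      by (apply continuous_of_ex_derive; auto_derive; auto).
    unfold continuous in C; rewrite atan_0, Rmult_0_r, Rminus_0_l in C; exact C.
Qed.

Lemma filterlim_gudermannian_p :
  filterlim gudermannian (Rbar_locally p_infty) (locally (PI / 2)).
Proof.
  apply (filterlim_ext (fun x => PI / 2 - 2 * atan (exp (- x)))).
  { intros x; unfold gudermannian; rewrite <- (Rinv_inv (exp x)), <- exp_Ropp.
    rewrite atan_inv by apply exp_pos; ring. }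
  apply (filterlim_comp _ _ _ (fun x => exp (- x)) (fun y => PI / 2 - 2 * atan y) _ (locally 0)).
  - exact is_lim_exp_opp_p.
  - assert (C : continuous (fun y => PI / 2 - 2 * atan y) 0)
      by (apply continuous_of_ex_derive; auto_derive; auto).
    unfold continuous in C; rewrite atan_0, Rmult_0_r, Rminus_0_r in C; exact C.
Qed.

(** * Integrals over the real line *)

Definition is_int_R (f : R -> R) (l : R) : Prop :=
  is_RInt_gen f (Rbar_locally m_infty) (Rbar_locally p_infty) l.

Lemma int_R_ext (f g : R -> R) : (forall x, f x = g x) -> int_R f = int_R g.
Proof. intros E; now rewrite (functional_extensionality f g E). Qed.

Lemma is_int_R_unique f l : is_int_R f l -> int_R f = l.
Proof. intros I; exact (is_RInt_gen_unique (V := R_CompleteNormedModule) f l I). Qed.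

Lemma is_int_R_ext (f g : R -> R) l : (forall x, f x = g x) -> is_int_R f l -> is_int_R g l.
Proof.
  intros E I; refine (is_RInt_gen_ext (V := R_NormedModule) f g l _ I).
  apply filter_forall; intros ab x _; apply E.
Qed.

Lemma is_int_R_plus f g lf lg :
  is_int_R f lf -> is_int_R g lg -> is_int_R (fun x => f x + g x) (lf + lg).
Proof. exact (is_RInt_gen_plus (V := R_NormedModule) f g lf lg). Qed.

Lemma is_int_R_minus f g lf lg :
  is_int_R f lf -> is_int_R g lg -> is_int_R (fun x => f x - g x) (lf - lg).
Proof. exact (is_RInt_gen_minus (V := R_NormedModule) f g lf lg). Qed.

Lemma is_int_R_scal c f l : is_int_R f l -> is_int_R (fun x => c * f x) (c * l).
Proof. exact (is_RInt_gen_scal (V := R_NormedModule) f c l). Qed.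

Lemma is_RInt_gen_derive {Fa Fb : (R -> Prop) -> Prop} {FFa : Filter Fa} {FFb : Filter Fb}
    (F dF : R -> R) (la lb : R) :
  (forall x, is_derive F x (dF x)) -> (forall x, continuous dF x) ->
  filterlim F Fa (locally la) -> filterlim F Fb (locally lb) ->
  is_RInt_gen dF Fa Fb (lb - la).
Proof.
  intros F_deriv dF_cont F_la F_lb.
  assert (Derive_F : forall x, Derive F x = dF x) by (intros; apply is_derive_unique, F_deriv).
  apply (is_RInt_gen_ext (Derive F)).
  { apply filter_forall; intros ab x _; apply Derive_F. }
  apply is_RInt_gen_Derive; auto; apply filter_forall; intros ab x _.
  - exists (dF x); apply F_deriv.
  - apply (continuous_ext dF); [intros; symmetry; apply Derive_F | apply dF_cont].
Qed.

Lemma is_int_R_derive (F dF : R -> R) :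
  (forall x, is_derive F x (dF x)) -> (forall x, continuous dF x) ->
  is_lim F m_infty 0 -> is_lim F p_infty 0 -> is_int_R dF 0.
Proof.
  intros F_deriv dF_cont F_m F_p; rewrite <- (Rminus_0_r 0).
  exact (is_RInt_gen_derive (Fa := Rbar_locally m_infty) (Fb := Rbar_locally p_infty)
           F dF 0 0 F_deriv dF_cont F_m F_p).
Qed.

Lemma ex_RInt_of_continuous (f : R -> R) u v : (forall x, continuous f x) -> ex_RInt f u v.
Proof.
  intros f_cont; apply (ex_RInt_continuous (V := R_CompleteNormedModule)); intros; apply f_cont.
Qed.

Lemma is_derive_RInt_0 (f : R -> R) x :
  (forall x, continuous f x) -> is_derive (fun y => RInt f 0 y) x (f x).
Proof.
  intros f_cont; apply (is_derive_RInt f _ 0); [|apply f_cont].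
  apply filter_forall; intros y.
  apply (RInt_correct (V := R_CompleteNormedModule)), ex_RInt_of_continuous, f_cont.
Qed.

Lemma is_RInt_gen_RInt_0 {Fa Fb : (R -> Prop) -> Prop} {FFa : Filter Fa} {FFb : Filter Fb}
    (f : R -> R) (la lb : R) :
  (forall x, continuous f x) ->
  filterlim (fun x => RInt f 0 x) Fa (locally la) ->
  filterlim (fun x => RInt f 0 x) Fb (locally lb) ->
  is_RInt_gen f Fa Fb (lb - la).
Proof.
  intros f_cont; apply is_RInt_gen_derive; [|exact f_cont].
  intros x; apply is_derive_RInt_0, f_cont.
Qed.

Section Dominated.

Variables f g G : R -> R.
Hypotheses (f_cont : forall x, continuous f x) (g_cont : forall x, continuous g x)
  (G_deriv : forall x, is_derive G x (g x)) (f_le_g : forall x, Rabs (f x) <= g x).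

Lemma Rabs_RInt_le_dominant u v : Rabs (RInt f u v) <= Rabs (G v - G u).
Proof.
  assert (ordered : forall u v, u <= v -> Rabs (RInt f u v) <= Rabs (G v - G u)).
  { intros a b ab.
    assert (RInt_g : RInt g a b = G b - G a).
    { apply is_RInt_unique, (is_RInt_derive G g); intros; [apply G_deriv | apply g_cont]. }
    apply Rle_trans with (RInt g a b); [|rewrite RInt_g; apply Rle_abs].
    apply Rle_trans with (RInt (fun t => Rabs (f t)) a b).
    - apply abs_RInt_le, ex_RInt_of_continuous; [exact ab | exact f_cont].
    - apply RInt_le; [exact ab | | apply ex_RInt_of_continuous, g_cont | intros; apply f_le_g].
      apply ex_RInt_of_continuous; intros; apply continuous_Rabs_comp, f_cont. }
  destruct (Rle_dec u v) as [uv | vu]; [now apply ordered|].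
  rewrite <- (opp_RInt_swap f) by apply ex_RInt_of_continuous, f_cont.
  change (opp ?a) with (- a); rewrite Rabs_Ropp, Rabs_minus_sym.
  apply ordered; lra.
Qed.

Lemma filterlim_RInt_dominated {F : (R -> Prop) -> Prop} {FF : ProperFilter F} l :
  filterlim G F (locally l) ->
  exists L, filterlim (fun x => RInt f 0 x) F (locally L) /\
    forall x, Rabs (RInt f 0 x - L) <= Rabs (G x - l).
Proof.
  intros G_lim.
  assert (RInt_diff : forall u v, Rabs (RInt f 0 v - RInt f 0 u) <= Rabs (G v - G u)).
  { intros u v; rewrite <- (RInt_Chasles f 0 u v) by apply ex_RInt_of_continuous, f_cont.
    change (plus ?a ?b) with (Rplus a b); rewrite Rplus_minus_l.
    apply Rabs_RInt_le_dominant. }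
  assert (cauchy : exists L, filterlim (fun x => RInt f 0 x) F (locally L)).
  { apply filterlim_locally_cauchy; intros eps.
    exists (fun x => ball l (pos_div_2 eps) (G x)).
    split; [exact (proj1 (filterlim_locally _ _) G_lim (pos_div_2 eps))|].
    intros u v Hu Hv.
    change (Rabs (G u - l) < eps / 2) in Hu; change (Rabs (G v - l) < eps / 2) in Hv.
    change (Rabs (RInt f 0 v - RInt f 0 u) < eps).
    apply Rle_lt_trans with (Rabs (G v - G u)); [apply RInt_diff|].
    apply Rabs_def2 in Hu; apply Rabs_def2 in Hv; apply Rabs_def1; lra. }
  destruct cauchy as [L L_lim]; exists L; split; [exact L_lim|]; intros x.
  apply (filterlim_le (F := F) (fun y => Rabs (RInt f 0 x - RInt f 0 y))
    (fun y => Rabs (G x - G y)) (Rabs (RInt f 0 x - L)) (Rabs (G x - l))).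
  - apply filter_forall; intros y; apply RInt_diff.
  - apply filterlim_Rabs_sub, L_lim.
  - apply filterlim_Rabs_sub, G_lim.
Qed.

Lemma is_int_R_dominated lm lp :
  filterlim G (Rbar_locally m_infty) (locally lm) ->
  filterlim G (Rbar_locally p_infty) (locally lp) ->
  is_int_R f (int_R f).
Proof.
  intros G_lm G_lp.
  destruct (filterlim_RInt_dominated lm G_lm) as [Lm [Lm_lim _]].
  destruct (filterlim_RInt_dominated lp G_lp) as [Lp [Lp_lim _]].
  assert (I : is_int_R f (Lp - Lm)) by exact (is_RInt_gen_RInt_0 f Lm Lp f_cont Lm_lim Lp_lim).
  rewrite (is_int_R_unique _ _ I); exact I.
Qed.

End Dominated.

(** * Convolution with exp (- a |x|) *)

Definition green (a : R) (g : R -> R) (x : R) : R :=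
  int_R (fun y => exp (- a * Rabs (x - y)) * g y).

Section Green.

Variables (M : R) (g : R -> R).
Hypotheses (g_cont : forall x, continuous g x) (g_bound : forall x, Rabs (g x) <= M).

Lemma continuous_exp_mul b x : continuous (fun y => exp (b * y) * g y) x.
Proof.
  apply continuous_Rmult; [|apply g_cont].
  apply continuous_of_ex_derive; auto_derive; exact I.
Qed.

Lemma filterlim_RInt_exp_mul {F : (R -> Prop) -> Prop} {FF : ProperFilter F} b :
  b <> 0 -> filterlim (fun y => exp (b * y)) F (locally 0) ->
  exists L, filterlim (fun x => RInt (fun y => exp (b * y) * g y) 0 x) F (locally L) /\
    forall x, Rabs (RInt (fun y => exp (b * y) * g y) 0 x - L) <= M / Rabs b * exp (b * x).
Proof.
  intros b_neq0 exp_lim.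
  assert (M_ge0 : 0 <= M) by (pose proof (Rabs_pos (g 0)); pose proof (g_bound 0); lra).
  set (G := fun y => M / b * exp (b * y)).
  assert (G_deriv : forall x, is_derive G x (M * exp (b * x))).
  { intros x; replace (M * exp (b * x)) with (M / b * (b * exp (b * x))) by now field.
    apply is_derive_scal, is_derive_exp_scal. }
  assert (G_lim : filterlim G F (locally 0)).
  { replace (locally 0) with (locally (M / b * 0)) by (f_equal; ring).
    apply (filterlim_comp_continuous (fun y => exp (b * y)) (fun z => M / b * z) 0 exp_lim).
    apply continuous_of_ex_derive; auto_derive; exact I. }
  assert (f_cont := continuous_exp_mul b).
  assert (dom_cont : forall x, continuous (fun y => M * exp (b * y)) x)
    by (intros x; apply continuous_of_ex_derive; auto_derive; exact I).
  assert (f_le : forall x, Rabs (exp (b * x) * g x) <= M * exp (b * x)).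
  { intros x; rewrite Rabs_mult, Rabs_pos_eq by apply Rlt_le, exp_pos.
    rewrite Rmult_comm; apply Rmult_le_compat_r; [apply Rlt_le, exp_pos | apply g_bound]. }
  destruct (filterlim_RInt_dominated _ _ G f_cont dom_cont G_deriv f_le 0 G_lim)
    as [L [L_lim L_bound]].
  exists L; split; [exact L_lim|]; intros x.
  eapply Rle_trans; [apply L_bound|]; unfold G.
  rewrite Rminus_0_r, Rabs_mult, Rabs_div, (Rabs_pos_eq M), (Rabs_pos_eq (exp _))
    by (try apply Rlt_le, exp_pos; assumption).
  apply Rle_refl.
Qed.

Lemma exp_convolution_half_line {F : (R -> Prop) -> Prop} {FF : ProperFilter F} b :
  b <> 0 -> filterlim (fun y => exp (b * y)) F (locally 0) ->
  exists P : R -> R,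
    (forall x, is_RInt_gen (fun y => exp (b * (y - x)) * g y) F (at_point x) (P x)) /\
    (forall x, is_derive P x (g x - b * P x)) /\
    (forall x, Rabs (P x) <= M / Rabs b).
Proof.
  intros b_neq0 exp_lim.
  destruct (filterlim_RInt_exp_mul b b_neq0 exp_lim) as [L [L_lim L_bound]].
  set (f := fun y => exp (b * y) * g y) in *.
  assert (f_cont : forall x, continuous f x) by apply continuous_exp_mul.
  exists (fun x => exp (- b * x) * (RInt f 0 x - L)); split; [|split].
  - intros x.
    assert (I : is_RInt_gen f F (at_point x) (RInt f 0 x - L))
      by (apply is_RInt_gen_RInt_0; [exact f_cont | exact L_lim | apply filterlim_at_point]).
    apply (is_RInt_gen_scal _ (exp (- b * x))) in I.
    eapply is_RInt_gen_ext; [|exact I].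
    apply filter_forall; intros ab y _; unfold f; change (scal ?u ?v) with (u * v).
    rewrite <- Rmult_assoc, <- exp_plus; do 2 f_equal; ring.
  - intros x; eapply is_derive_Rmult;
      [apply is_derive_exp_scal | apply is_derive_sub_const, is_derive_RInt_0, f_cont |].
    unfold f; rewrite <- Rmult_assoc, exp_scal_opp_mul; ring.
  - intros x; rewrite Rabs_mult, Rabs_pos_eq by apply Rlt_le, exp_pos.
    apply Rle_trans with (exp (- b * x) * (M / Rabs b * exp (b * x))).
    + apply Rmult_le_compat_l; [apply Rlt_le, exp_pos | apply L_bound].
    + rewrite Rmult_comm, Rmult_assoc, (Rmult_comm (exp _)), exp_scal_opp_mul; lra.
Qed.

Lemma green_spec a : 0 < a ->
  exists w : R -> R,
    (forall x, is_derive (green a g) x (w x)) /\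
    (forall x, is_derive w x (a ^ 2 * green a g x - 2 * a * g x)) /\
    (forall x, Rabs (green a g x) <= 2 * M / a) /\
    (forall x, Rabs (w x) <= 2 * M).
Proof.
  intros a_pos.
  destruct (exp_convolution_half_line (F := Rbar_locally m_infty) a)
    as (P & P_int & P_deriv & P_bound);
    [lra | now apply is_lim_exp_scal_m |].
  destruct (exp_convolution_half_line (F := Rbar_locally p_infty) (- a))
    as (Q & Q_int & Q_deriv & Q_bound);
    [lra | now apply is_lim_exp_scal_p |].
  assert (PQ_bound : forall x, - (M / a) <= P x <= M / a /\ - (M / a) <= Q x <= M / a).
  { intros x; specialize (P_bound x); specialize (Q_bound x).
    rewrite (Rabs_pos_eq a) in P_bound by lra; rewrite Rabs_Ropp, (Rabs_pos_eq a) in Q_bound by lra.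
    split; apply Rabs_le_between; assumption. }
  assert (green_eq : forall x, green a g x = P x - Q x).
  { intros x; apply is_int_R_unique, (is_RInt_gen_Chasles _ x (P x) (opp (Q x))).
    - eapply is_RInt_gen_ext; [|apply P_int].
      exists (fun u => u < x) (fun v => v = x); [now exists x | reflexivity |].
      intros u v u_lt v_eq_r_s y; simpl; subst v; rewrite Rmin_left, Rmax_right by lra; intros y_in.
      rewrite Rabs_pos_eq by lra; do 2 f_equal; ring.
    - apply (is_RInt_gen_swap (V := R_NormedModule)); eapply is_RInt_gen_ext; [|apply Q_int].
      exists (fun u => u > x) (fun v => v = x); [now exists x | reflexivity |].
      intros u v u_gt v_eq_r_s y; simpl; subst v; rewrite Rmin_right, Rmax_left by lra; intros y_in.
      rewrite Rabs_minus_sym, Rabs_pos_eq by lra; do 2 f_equal; ring. }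
  exists (fun x => - a * (P x + Q x)); split; [|split; [|split]].
  - intros x; apply (is_derive_ext (fun y => P y - Q y)); [intros; symmetry; apply green_eq|].
    replace (- a * (P x + Q x)) with ((g x - a * P x) - (g x - - a * Q x)) by ring.
    apply (is_derive_minus (V := R_NormedModule)); [apply P_deriv | apply Q_deriv].
  - intros x; rewrite green_eq.
    replace (a ^ 2 * (P x - Q x) - 2 * a * g x) with (- a * ((g x - a * P x) + (g x - - a * Q x)))
      by ring.
    apply is_derive_scal, (is_derive_plus (V := R_NormedModule)); [apply P_deriv | apply Q_deriv].
  - intros x; rewrite green_eq.
    apply Rabs_le_between; pose proof (PQ_bound x); lra.
  - intros x; rewrite Rabs_mult, Rabs_Ropp, Rabs_pos_eq by lra.
    apply Rle_trans with (a * (2 * M / a)).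
    + apply Rmult_le_compat_l; [lra|]; apply Rabs_le_between; pose proof (PQ_bound x); lra.
    + apply Req_le; field; lra.
Qed.

End Green.

(** * Integrals weighted by powers of sech *)

Definition bounded_continuous (h : R -> R) : Prop :=
  (forall x, continuous h x) /\ exists M, forall x, Rabs (h x) <= M.

Lemma bounded_continuous_const c : bounded_continuous (fun _ => c).
Proof. split; [intros; apply continuous_const | exists (Rabs c); intros; apply Rle_refl]. Qed.

Lemma bounded_continuous_mult h1 h2 :
  bounded_continuous h1 -> bounded_continuous h2 -> bounded_continuous (fun x => h1 x * h2 x).
Proof.
  intros [c1 [M1 b1]] [c2 [M2 b2]]; split; [intros; apply continuous_Rmult; auto|].
  exists (M1 * M2); intros x; rewrite Rabs_mult.
  apply Rmult_le_compat; auto using Rabs_pos.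
Qed.

Lemma bounded_continuous_plus h1 h2 :
  bounded_continuous h1 -> bounded_continuous h2 -> bounded_continuous (fun x => h1 x + h2 x).
Proof.
  intros [c1 [M1 b1]] [c2 [M2 b2]].
  split; [intros; apply (continuous_plus (V := R_NormedModule)); auto|].
  exists (M1 + M2); intros x; eapply Rle_trans; [apply Rabs_triang | apply Rplus_le_compat; auto].
Qed.

Lemma bounded_continuous_minus h1 h2 :
  bounded_continuous h1 -> bounded_continuous h2 -> bounded_continuous (fun x => h1 x - h2 x).
Proof.
  intros [c1 [M1 b1]] [c2 [M2 b2]].
  split; [intros; apply (continuous_minus (V := R_NormedModule)); auto|].
  exists (M1 + M2); intros x; unfold Rminus; eapply Rle_trans; [apply Rabs_triang|].
  rewrite Rabs_Ropp; apply Rplus_le_compat; auto.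
Qed.

Lemma bounded_continuous_opp h : bounded_continuous h -> bounded_continuous (fun x => - h x).
Proof.
  intros [c [M b]]; split; [intros; apply (continuous_opp (V := R_NormedModule)), c|].
  exists M; intros x; rewrite Rabs_Ropp; apply b.
Qed.

Lemma bounded_continuous_sin : bounded_continuous sin.
Proof.
  split; [intros; apply continuous_of_ex_derive; auto_derive; exact I|].
  exists 1; intros; apply Rabs_le, SIN_bound.
Qed.

Lemma bounded_continuous_cos : bounded_continuous cos.
Proof.
  split; [intros; apply continuous_of_ex_derive; auto_derive; exact I|].
  exists 1; intros; apply Rabs_le, COS_bound.
Qed.

Lemma bounded_continuous_tanh : bounded_continuous tanh.
Proof.
  split; [intros x; apply continuous_of_ex_derive; eexists; apply is_derive_tanh|].
  exists 1; apply Rabs_tanh_le_1.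
Qed.

Lemma bounded_continuous_sech_pow n : bounded_continuous (fun x => sech x ^ n).
Proof.
  split; [intros x; apply continuous_of_ex_derive; eexists; apply is_derive_sech_pow|].
  exists 1; intros x; rewrite Rabs_pos_eq; [apply sech_pow_le_1 |].
  apply pow_le, Rlt_le, sech_pos.
Qed.

Create HintDb bounded_continuous.
#[local] Hint Resolve bounded_continuous_const bounded_continuous_mult bounded_continuous_plus
  bounded_continuous_minus bounded_continuous_opp bounded_continuous_sin bounded_continuous_cos
  bounded_continuous_tanh bounded_continuous_sech_pow : bounded_continuous.

Definition sech_int (k : nat) (h : R -> R) : R := int_R (fun x => sech x ^ k * h x).

Lemma is_int_R_sech_int k h :
  (0 < k)%nat -> bounded_continuous h -> is_int_R (fun x => sech x ^ k * h x) (sech_int k h).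
Proof.
  intros k_pos [h_cont [M h_bound]]; destruct k as [|n]; [lia|].
  apply (is_int_R_dominated _ (fun x => M * sech x) (fun x => M * gudermannian x))
    with (lm := M * - (PI / 2)) (lp := M * (PI / 2)).
  - intros x; apply continuous_Rmult; [apply bounded_continuous_sech_pow | apply h_cont].
  - intros x; apply continuous_Rmult; [apply continuous_const | apply continuous_sech].
  - intros x; apply is_derive_scal, is_derive_gudermannian.
  - intros x; apply Rabs_sech_pow_mul_le, h_bound.
  - apply (filterlim_comp_continuous gudermannian (fun z => M * z));
      [apply filterlim_gudermannian_m|].
    apply continuous_Rmult; [apply continuous_const | apply continuous_id].
  - apply (filterlim_comp_continuous gudermannian (fun z => M * z));
      [apply filterlim_gudermannian_p|].
    apply continuous_Rmult; [apply continuous_const | apply continuous_id].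
Qed.

Lemma is_lim_sech_pow_mul (s : Rbar) k h :
  (0 < k)%nat -> bounded_continuous h -> is_lim sech s 0 ->
  is_lim (fun x => sech x ^ k * h x) s 0.
Proof.
  intros k_pos [_ [M h_bound]] sech_lim; destruct k as [|n]; [lia|].
  apply (filterlim_le_le (fun x => - M * sech x) _ (fun x => M * sech x));
    [| apply is_lim_scal_0, sech_lim ..].
  apply filter_forall; intros x.
  pose proof (Rabs_sech_pow_mul_le n h M x (h_bound x)) as bound.
  apply Rabs_le_between in bound; lra.
Qed.

Lemma sech_int_ext k h1 h2 : (forall x, h1 x = h2 x) -> sech_int k h1 = sech_int k h2.
Proof. intros E; apply int_R_ext; intros x; now rewrite E. Qed.

Lemma sech_int_sech_sqr k h : sech_int k (fun x => sech x ^ 2 * h x) = sech_int (S (S k)) h.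
Proof. apply int_R_ext; intros x; simpl; ring. Qed.

Section SechIntLinear.

Variables (k : nat) (h1 h2 : R -> R).
Hypotheses (k_pos : (0 < k)%nat)
  (h1_bc : bounded_continuous h1) (h2_bc : bounded_continuous h2).

Lemma sech_int_plus : sech_int k (fun x => h1 x + h2 x) = sech_int k h1 + sech_int k h2.
Proof.
  apply is_int_R_unique, (is_int_R_ext (fun x => sech x ^ k * h1 x + sech x ^ k * h2 x));
    [intros; ring|].
  apply is_int_R_plus; apply is_int_R_sech_int; assumption.
Qed.

Lemma sech_int_minus : sech_int k (fun x => h1 x - h2 x) = sech_int k h1 - sech_int k h2.
Proof.
  apply is_int_R_unique, (is_int_R_ext (fun x => sech x ^ k * h1 x - sech x ^ k * h2 x));
    [intros; ring|].
  apply is_int_R_minus; apply is_int_R_sech_int; assumption.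
Qed.

Lemma sech_int_scal c : sech_int k (fun x => c * h1 x) = c * sech_int k h1.
Proof.
  apply is_int_R_unique, (is_int_R_ext (fun x => c * (sech x ^ k * h1 x))); [intros; ring|].
  apply is_int_R_scal, is_int_R_sech_int; assumption.
Qed.

End SechIntLinear.

Lemma sech_int_deriv k h dh :
  (0 < k)%nat -> (forall x, is_derive h x (dh x)) ->
  bounded_continuous h -> bounded_continuous dh ->
  sech_int k dh = INR k * sech_int k (fun x => tanh x * h x).
Proof.
  intros k_pos h_deriv h_bc dh_bc.
  assert (boundary : is_int_R (fun x => sech x ^ k * (dh x - INR k * (tanh x * h x))) 0).
  { apply (is_int_R_derive (fun x => sech x ^ k * h x)).
    - intros x; eapply is_derive_Rmult; [apply is_derive_sech_pow | apply h_deriv | ring].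
    - assert (bc : bounded_continuous (fun x => sech x ^ k * (dh x - INR k * (tanh x * h x))))
        by auto with bounded_continuous.
      apply bc.
    - apply is_lim_sech_pow_mul; [exact k_pos | exact h_bc | exact is_lim_sech_m].
    - apply is_lim_sech_pow_mul; [exact k_pos | exact h_bc | exact is_lim_sech_p]. }
  apply is_int_R_unique in boundary.
  change (sech_int k (fun x => dh x - INR k * (tanh x * h x)) = 0) in boundary.
  rewrite sech_int_minus, sech_int_scal in boundary by auto with bounded_continuous.
  lra.
Qed.

Lemma sech_int_tanh_deriv k h dh :
  (0 < k)%nat -> (forall x, is_derive h x (dh x)) ->
  bounded_continuous h -> bounded_continuous dh ->
  INR (S k) * sech_int (S (S k)) h = INR k * sech_int k h - sech_int k (fun x => tanh x * dh x).
Proof.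
  intros k_pos h_deriv h_bc dh_bc.
  assert (tanh_h_deriv :
    forall x, is_derive (fun y => tanh y * h y) x (sech x ^ 2 * h x + tanh x * dh x))
    by (intros x; eapply is_derive_Rmult; [apply is_derive_tanh | apply h_deriv | reflexivity]).
  pose proof (sech_int_deriv k _ _ k_pos tanh_h_deriv
    ltac:(auto with bounded_continuous) ltac:(auto with bounded_continuous)) as E.
  cbv beta in E.
  rewrite (sech_int_ext k (fun x => tanh x * (tanh x * h x)) (fun x => h x - sech x ^ 2 * h x)) in E
    by (intros x; replace (tanh x * (tanh x * h x)) with (tanh x ^ 2 * h x) by ring;
        rewrite tanh_sqr; ring).
  rewrite sech_int_plus, sech_int_minus, !sech_int_sech_sqr in E by auto with bounded_continuous.
  rewrite S_INR; lra.
Qed.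

Definition q_ (k : nat) : R := sech_int k (fun x => tanh x * sin x).

Lemma p_eq_INR_mul_q k : (0 < k)%nat -> p_ k = INR k * q_ k.
Proof.
  intros k_pos; exact (sech_int_deriv k sin cos k_pos is_derive_sin
    bounded_continuous_sin bounded_continuous_cos).
Qed.

Lemma p_recurrence k : (0 < k)%nat -> INR (S k) * p_ (S (S k)) = INR k * p_ k + q_ k.
Proof.
  intros k_pos.
  pose proof (sech_int_tanh_deriv k cos (fun x => - sin x) k_pos is_derive_cos
    bounded_continuous_cos ltac:(auto with bounded_continuous)) as E.
  cbv beta in E.
  rewrite (sech_int_ext k (fun x => tanh x * - sin x) (fun x => -1 * (tanh x * sin x))) in E
    by (intros; ring).
  rewrite sech_int_scal in E by auto with bounded_continuous.
  change (sech_int ?n cos) with (p_ n) in E; fold (q_ k) in E; lra.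
Qed.

Lemma p_odd_values :
  p_ 3 = p_ 1 /\ p_ 5 = 5 / 6 * p_ 1 /\ p_ 7 = 13 / 18 * p_ 1 /\
  q_ 3 = p_ 1 / 3 /\ q_ 5 = p_ 1 / 6.
Proof.
  pose proof (p_eq_INR_mul_q 1 ltac:(lia)); pose proof (p_eq_INR_mul_q 3 ltac:(lia));
  pose proof (p_eq_INR_mul_q 5 ltac:(lia)).
  pose proof (p_recurrence 1 ltac:(lia)); pose proof (p_recurrence 3 ltac:(lia));
  pose proof (p_recurrence 5 ltac:(lia)).
  simpl INR in *; repeat split; lra.
Qed.

(** * The moments of T *)

Lemma T_green_ode :
  exists w : R -> R,
    (forall x, is_derive T x (w x)) /\
    (forall x, is_derive w x (2 * T x - 2 * sqrt 2 * sech x ^ 2)) /\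
    bounded_continuous T /\ bounded_continuous w.
Proof.
  assert (sqrt2_pos : 0 < sqrt 2) by (apply sqrt_lt_R0; lra).
  assert (sech_sqr_bound : forall x, Rabs (sech x ^ 2) <= 1)
    by (intros x; rewrite Rabs_pos_eq by apply pow_le, Rlt_le, sech_pos; apply sech_pow_le_1).
  destruct (green_spec 1 (fun y => sech y ^ 2) (proj1 (bounded_continuous_sech_pow 2))
    sech_sqr_bound (sqrt 2) sqrt2_pos) as (w & T_deriv & w_deriv & T_bound & w_bound).
  change (green (sqrt 2) (fun y => sech y ^ 2)) with T in *.
  rewrite pow2_sqrt in w_deriv by lra.
  exists w; split; [|split; [|split]]; try assumption.
  - split; [intros x; apply continuous_of_ex_derive; eexists; apply T_deriv|].
    exists (2 * 1 / sqrt 2); exact T_bound.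
  - split; [intros x; apply continuous_of_ex_derive; eexists; apply w_deriv|].
    exists (2 * 1); exact w_bound.
Qed.

Lemma T_ode :
  (forall x, is_derive T x (Derive T x)) /\
  (forall x, is_derive (Derive T) x (2 * T x - 2 * sqrt 2 * sech x ^ 2)) /\
  bounded_continuous T /\ bounded_continuous (Derive T).
Proof.
  destruct T_green_ode as (w & T_deriv & w_deriv & T_bc & w_bc).
  replace (Derive T) with w; [exact (conj T_deriv (conj w_deriv (conj T_bc w_bc)))|].
  apply functional_extensionality; intros x; symmetry; apply is_derive_unique, T_deriv.
Qed.

Definition u_ (k : nat) : R := sech_int k (fun x => Derive T x * sin x).
Definition v_ (k : nat) : R := sech_int k (fun x => tanh x * (Derive T x * cos x)).

Lemma r_eq_sech_int k : r_ k = sech_int k (fun x => T x * cos x).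
Proof. apply int_R_ext; intros; ring. Qed.

Lemma s_eq_sech_int k : s_ k = sech_int k (fun x => tanh x * (T x * sin x)).
Proof. apply int_R_ext; intros; ring. Qed.

Lemma u_eq_s_r k : (0 < k)%nat -> u_ k = INR k * s_ k - r_ k.
Proof.
  intros k_pos; destruct T_ode as (T_deriv & DT_deriv & T_bc & DT_bc).
  assert (E : sech_int k (fun x => Derive T x * sin x + T x * cos x)
              = INR k * sech_int k (fun x => tanh x * (T x * sin x))).
  { apply sech_int_deriv; auto with bounded_continuous.
    intros x; eapply is_derive_Rmult; [apply T_deriv | apply is_derive_sin | ring]. }
  rewrite sech_int_plus in E by auto with bounded_continuous.
  rewrite r_eq_sech_int, s_eq_sech_int; unfold u_; lra.
Qed.

Lemma v_eq_r_s k : (0 < k)%nat -> v_ k = INR k * r_ k - INR (S k) * r_ (S (S k)) + s_ k.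
Proof.
  intros k_pos; destruct T_ode as (T_deriv & DT_deriv & T_bc & DT_bc).
  assert (E : INR (S k) * sech_int (S (S k)) (fun x => T x * cos x)
              = INR k * sech_int k (fun x => T x * cos x)
                - sech_int k (fun x => tanh x * (Derive T x * cos x - T x * sin x))).
  { apply sech_int_tanh_deriv; auto with bounded_continuous.
    intros x; eapply is_derive_Rmult; [apply T_deriv | apply is_derive_cos | ring]. }
  rewrite (sech_int_ext k (fun x => tanh x * (Derive T x * cos x - T x * sin x))
             (fun x => tanh x * (Derive T x * cos x) - tanh x * (T x * sin x))) in E
    by (intros; ring).
  rewrite sech_int_minus in E by auto with bounded_continuous.
  rewrite !r_eq_sech_int, s_eq_sech_int; unfold v_; lra.
Qed.

Lemma Derive_T_cos_relation k :
  (0 < k)%nat -> 2 * r_ k - 2 * sqrt 2 * p_ (S (S k)) - u_ k = INR k * v_ k.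
Proof.
  intros k_pos; destruct T_ode as (T_deriv & DT_deriv & T_bc & DT_bc).
  assert (E : sech_int k (fun x => 2 * (T x * cos x) - 2 * sqrt 2 * (sech x ^ 2 * cos x)
                                   - Derive T x * sin x)
              = INR k * sech_int k (fun x => tanh x * (Derive T x * cos x))).
  { apply sech_int_deriv; auto with bounded_continuous.
    intros x; eapply is_derive_Rmult; [apply DT_deriv | apply is_derive_cos | ring]. }
  rewrite !sech_int_minus, !sech_int_scal, sech_int_sech_sqr in E by auto with bounded_continuous.
  change (sech_int ?n cos) with (p_ n) in E.
  rewrite r_eq_sech_int; unfold u_, v_; lra.
Qed.

Lemma Derive_T_sin_relation k :
  (0 < k)%nat ->
  INR (S k) * u_ (S (S k)) = INR k * u_ k - (2 * s_ k - 2 * sqrt 2 * q_ (S (S k)) + v_ k).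
Proof.
  intros k_pos; destruct T_ode as (T_deriv & DT_deriv & T_bc & DT_bc).
  assert (E : INR (S k) * sech_int (S (S k)) (fun x => Derive T x * sin x)
              = INR k * sech_int k (fun x => Derive T x * sin x)
                - sech_int k (fun x => tanh x * (2 * (T x * sin x)
                    - 2 * sqrt 2 * (sech x ^ 2 * sin x) + Derive T x * cos x))).
  { apply sech_int_tanh_deriv; auto with bounded_continuous.
    intros x; eapply is_derive_Rmult; [apply DT_deriv | apply is_derive_sin | ring]. }
  rewrite (sech_int_ext k
             (fun x => tanh x * (2 * (T x * sin x) - 2 * sqrt 2 * (sech x ^ 2 * sin x)
                                 + Derive T x * cos x))
             (fun x => 2 * (tanh x * (T x * sin x))
             - 2 * sqrt 2 * (sech x ^ 2 * (tanh x * sin x)) + tanh x * (Derive T x * cos x))) in E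
    by (intros; ring).
  rewrite sech_int_plus, sech_int_minus, !sech_int_scal, sech_int_sech_sqr in E
    by auto with bounded_continuous.
  rewrite s_eq_sech_int; unfold u_, v_, q_; lra.
Qed.

Lemma r_recurrence k :
  (0 < k)%nat ->
  INR k * INR (S k) * r_ (S (S k))
  = (INR k ^ 2 - 3) * r_ k + 2 * INR k * s_ k + 2 * sqrt 2 * p_ (S (S k)).
Proof.
  intros k_pos; pose proof (Derive_T_cos_relation k k_pos) as W.
  rewrite u_eq_s_r, v_eq_r_s, S_INR in W by exact k_pos; rewrite S_INR; lra.
Qed.

Lemma s_recurrence k :
  (0 < k)%nat ->
  INR (S k) * INR (S (S k)) * s_ (S (S k))
  = 2 * INR (S k) * r_ (S (S k)) - 2 * INR k * r_ k + (INR k ^ 2 - 3) * s_ k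
    + 2 * sqrt 2 * q_ (S (S k)).
Proof.
  intros k_pos; pose proof (Derive_T_sin_relation k k_pos) as X.
  rewrite !u_eq_s_r, v_eq_r_s in X by lia; rewrite !S_INR in *; lra.
Qed.

Theorem lemma3p3 :
  r_ 3 = - r_ 1 + s_ 1 + sqrt 2 * p_ 1 /\
  s_ 3 = (1/3) * s_ 1 - r_ 1 + (7/9) * sqrt 2 * p_ 1 /\
  r_ 5 = - r_ 1 + (2/3) * s_ 1 + (37/36) * sqrt 2 * p_ 1 /\
  s_ 5 = - (2/5) * r_ 1 + (1/15) * s_ 1 + (13/36) * sqrt 2 * p_ 1 /\
  r_ 7 = - (13/15) * r_ 1 + (23/45) * s_ 1 + (83 * sqrt 2 / 90) * p_ 1.
Proof.
  destruct p_odd_values as (p3 & p5 & p7 & q3 & q5).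
  pose proof (r_recurrence 1 ltac:(lia)) as r3.
  pose proof (r_recurrence 3 ltac:(lia)) as r5.
  pose proof (r_recurrence 5 ltac:(lia)) as r7.
  pose proof (s_recurrence 1 ltac:(lia)) as s3.
  pose proof (s_recurrence 3 ltac:(lia)) as s5.
  rewrite p3, p5, p7 in *; rewrite q3, q5 in *; simpl INR in *.
  repeat split; lra.
Qed.
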